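(* Let $(H,k,\chi)$ be an instance of Precoloring Extension with $H=(V,F)$, $V=\{1,\dots,n\}$, $H$ having at least one edge. Construct a $P_n\,|\,\mathrm{conc}\,|\,C_{\max}$ instance as follows: jobs $1,\dots,n$ with $p_j=1$ and conflict graph initially $G=H$; jobs $a,b$ with $p_a=p_b=1$ and jobs $a',b'$ with $p_{a'}=p_{b'}=k-1$, with conflict edges $\{a,a'\},\{b,b'\},\{a,b\}$; for each $j\in V_0$ with $\chi(j)\in\{2,\dots,k-1\}$, jobs $j(1),j(2)$ with $p_{j(1)}=\chi(j)-1$, $p_{j(2)}=k-\chi(j)$ and conflict edges $\{j,j(1)\},\{j,j(2)\},\{j(1),j(2)\},\{a,j\},\{b,j\},\{a,j(2)\},\{b,j(1)\}$; for each $j\in V_0$ with $\chi(j)=1$, a job $j(2)$ with $p_{j(2)}=k-1$ and conflict edges $\{j,j(2)\},\{b,j\},\{a,j(2)\}$; for each $j\in V_0$ with $\chi(j)=k$, a job $j(1)$ with $p_{j(1)}=k-1$ and conflict edges $\{j,j(1)\},\{a,j\},\{b,j(1)\}$. If $(H,k,\chi)$ has a solution $\chi':\{1,\dots,n\}\to\{1,\dots,k\}$, then the constructed instance has a feasible schedule $C$ with $C_{\max}\le k$.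
   Context: Precoloring Extension: given a graph $H=(V,F)$, an integer $k$, and a proper coloring $\chi:V_0\to\{1,\dots,k\}$ of $H[V_0]$ for some $V_0\subseteq V$, a solution is a proper coloring $\chi':V\to\{1,\dots,k\}$ of $H$ with $\chi'(v)=\chi(v)$ for all $v\in V_0$. In $P_n\,|\,\mathrm{conc}\,|\,C_{\max}$, each job $j$ has integer processing time $p_j\ge1$ and release time $0$, and there is a conflict graph $G$; a schedule $C$ assigning each job a completion time $C_j\in\mathbb{N}$ is feasible if $C_j-p_j\ge0$ for all $j$ and $[C_i-p_i,C_i)\cap[C_j-p_j,C_j)=\emptyset$ for all edges $\{i,j\}$ of $G$; $C_{\max}=\max_j C_j$. *)

From mathcomp Require Import all_boot.
Set Implicit Arguments. Unset Strict Implicit. Unset Printing Implicit Defensive.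

(* Vertices of H are 'I_n (i.e. 0..n-1, a relabeling of 1..n).
   H is a simple graph: symmetric irreflexive relation on 'I_n. *)

Definition pce_instance n (H : rel 'I_n) (k : nat) (V0 : {set 'I_n})
  (chi : 'I_n -> nat) : Prop :=
  (forall u v, H u v = H v u) /\ (forall v, ~~ H v v) /\
  (forall v, v \in V0 -> 1 <= chi v <= k) /\
  (forall u v, u \in V0 -> v \in V0 -> H u v -> chi u != chi v).

Definition pce_solution n (H : rel 'I_n) (k : nat) (V0 : {set 'I_n})
  (chi : 'I_n -> nat) (chi' : 'I_n -> nat) : Prop :=
  (forall v, 1 <= chi' v <= k) /\
  (forall u v, H u v -> chi' u != chi' v) /\
  (forall v, v \in V0 -> chi' v = chi v).

(* Job names of the constructed scheduling instance:
   Jv j = job j (j in V), Ja, Jb = a, b, Ja', Jb' = a', b',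
   J1 j = j(1), J2 j = j(2). *)
Inductive job (n : nat) : Type :=
| Jv of 'I_n | Ja | Jb | Ja' | Jb' | J1 of 'I_n | J2 of 'I_n.
Arguments Ja {n}. Arguments Jb {n}. Arguments Ja' {n}. Arguments Jb' {n}.

Definition mid k (c : nat) : bool := (2 <= c) && (c <= k - 1).

Definition is_job n (k : nat) (V0 : {set 'I_n}) (chi : 'I_n -> nat)
  (x : job n) : bool :=
  match x with
  | J1 j => (j \in V0) && (mid k (chi j) || (chi j == k))
  | J2 j => (j \in V0) && (mid k (chi j) || (chi j == 1))
  | _ => true
  end.

Definition ptime n (k : nat) (chi : 'I_n -> nat) (x : job n) : nat :=
  match x with
  | Jv _ => 1 | Ja => 1 | Jb => 1 | Ja' => k - 1 | Jb' => k - 1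
  | J1 j => if mid k (chi j) then chi j - 1 else k - 1
  | J2 j => if mid k (chi j) then k - chi j else k - 1
  end.

(* Conflict edges (each unordered edge listed once, as in the paper). *)
Definition conflict n (H : rel 'I_n) (k : nat) (V0 : {set 'I_n})
  (chi : 'I_n -> nat) (x y : job n) : Prop :=
  match x, y with
  | Jv u, Jv v => H u v
  | Ja, Ja' => True
  | Jb, Jb' => True
  | Ja, Jb => True
  | Jv j, J1 j' => j = j' /\ j \in V0 /\ (mid k (chi j) \/ chi j = k)
  | Jv j, J2 j' => j = j' /\ j \in V0 /\ (mid k (chi j) \/ chi j = 1)
  | J1 j, J2 j' => j = j' /\ j \in V0 /\ mid k (chi j)
  | Ja, Jv j => j \in V0 /\ (mid k (chi j) \/ chi j = k)
  | Jb, Jv j => j \in V0 /\ (mid k (chi j) \/ chi j = 1)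
  | Ja, J2 j => j \in V0 /\ (mid k (chi j) \/ chi j = 1)
  | Jb, J1 j => j \in V0 /\ (mid k (chi j) \/ chi j = k)
  | _, _ => False
  end.

(* Feasible schedule: completion times C, release times 0, and
   conflicting jobs have disjoint intervals [C - p, C). *)
Definition feasible n (H : rel 'I_n) (k : nat) (V0 : {set 'I_n})
  (chi : 'I_n -> nat) (C : job n -> nat) : Prop :=
  (forall x, is_job k V0 chi x -> ptime k chi x <= C x) /\
  (forall x y, conflict H k V0 chi x y ->
     forall t : nat, ~ ((C x - ptime k chi x <= t < C x) /\
                        (C y - ptime k chi y <= t < C y))).

Definition cmax_le n (k : nat) (V0 : {set 'I_n}) (chi : 'I_n -> nat)
  (C : job n -> nat) (K : nat) : Prop :=
  forall x, is_job k V0 chi x -> C x <= K.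

From mathcomp Require Import all_boot zify.

Set Implicit Arguments.
Unset Strict Implicit.

(* Time slot [c - 1, c) stands for colour c.  Job [a] fills slot 1 and [b]
   slot k, while [a'] and [b'] fill the rest of the horizon, so every
   vertex job conflicting with [a] (resp. [b]) avoids slot 1 (resp. k).
   For a precoloured vertex j the jobs j(1) and j(2) fill [0, chi j - 1) and
   [chi j, k), which pins j to slot chi j; a proper extension chi' therefore
   yields a feasible schedule of length k by running every vertex job j in
   slot chi' j. *)

Definition start n (k : nat) (chi chi' : 'I_n -> nat) (x : job n) : nat :=
  match x with
  | Jv j => (chi' j).-1
  | Ja | Jb' | J1 _ => 0
  | Ja' => 1
  | Jb => k.-1
  | J2 j => chi j
  end.

Lemma feasible_of_start n (H : rel 'I_n) k V0 chi (S : job n -> nat) :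
  (forall x y, conflict H k V0 chi x y ->
     S x + ptime k chi x <= S y \/ S y + ptime k chi y <= S x) ->
  feasible H k V0 chi (fun x => S x + ptime k chi x).
Proof.
move=> disjoint_S; split=> [x _|x y /disjoint_S]; first exact: leq_addl.
by rewrite !addnK; lia.
Qed.

(* j(1) and j(2) are omitted exactly when their length would be 0, so their
   lengths are chi j - 1 and k - chi j whenever they exist. *)
Lemma ptime_J1 n k (chi : 'I_n -> nat) j :
  mid k (chi j) \/ chi j = k -> ptime k chi (J1 j) = chi j - 1.
Proof. by rewrite /=; case: ifP => // _ [//|->]. Qed.

Lemma ptime_J2 n k (chi : 'I_n -> nat) j :
  mid k (chi j) \/ chi j = 1 -> ptime k chi (J2 j) = k - chi j.
Proof. by rewrite /=; case: ifP => // _ [//|->]. Qed.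

Lemma colors_ge2_of_edge n (H : rel 'I_n) k (col : 'I_n -> nat) u v :
  (forall w, 1 <= col w <= k) -> (forall u v, H u v -> col u != col v) ->
  H u v -> 2 <= k.
Proof.
move=> col_range col_proper /col_proper.
by have := col_range u; have := col_range v; lia.
Qed.

Section Schedule.

Variables (n : nat) (H : rel 'I_n) (k : nat) (V0 : {set 'I_n}).
Variables (chi chi' : 'I_n -> nat).
Hypothesis chi_range : forall v, v \in V0 -> 1 <= chi v <= k.
Hypothesis chi'_range : forall v, 1 <= chi' v <= k.
Hypothesis chi'_proper : forall u v, H u v -> chi' u != chi' v.
Hypothesis chi'_ext : forall v, v \in V0 -> chi' v = chi v.
Hypothesis k_ge2 : 2 <= k.

Local Notation p := (ptime k chi).
Local Notation S := (start k chi chi').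

Lemma start_ptime_le x : is_job k V0 chi x -> S x + p x <= k.
Proof.
case: x => [j|||||j|j] //=; try lia.
- by have := chi'_range j; lia.
- by case/andP=> /chi_range; case: ifP; lia.
- by case/andP=> /chi_range; case: ifP; lia.
Qed.

Lemma start_conflict_disjoint x y :
  conflict H k V0 chi x y -> S x + p x <= S y \/ S y + p y <= S x.
Proof.
have Jv_slot j : j \in V0 -> S (Jv j) = chi j - 1 /\ 1 <= chi j <= k.
  by move=> jV0; rewrite /= chi'_ext // -subn1; split; [|exact: chi_range].
have top_ge2 c : mid k c \/ c = k -> 2 <= c by rewrite /mid; lia.
have bot_lt c : mid k c \/ c = 1 -> c < k by rewrite /mid; lia.
case: x => [u|||||u|u]; case: y => [v|||||v|v] //; try (simpl; lia).
- by move/chi'_proper; have := chi'_range u; have := chi'_range v; rewrite /=; lia.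
- by case=> <- [/Jv_slot[-> _] top]; rewrite (ptime_J1 top) /=; lia.
- by case=> <- [/Jv_slot[-> range] bot]; rewrite (ptime_J2 bot) /=; lia.
- by case=> /Jv_slot[-> _] /top_ge2; rewrite /=; lia.
- by case=> /chi_range range bot; rewrite (ptime_J2 bot) /=; lia.
- by case=> /Jv_slot[-> _] /bot_lt; rewrite /=; lia.
- by case=> /chi_range range top; rewrite (ptime_J1 top) /=; lia.
- case=> <- [/chi_range range mid_u].
  by rewrite (ptime_J1 (or_introl mid_u)) (ptime_J2 (or_introl mid_u)) /=; lia.
Qed.

End Schedule.

Theorem lemma9 (n : nat) (H : rel 'I_n) (k : nat) (V0 : {set 'I_n})
  (chi : 'I_n -> nat) :
  pce_instance H k V0 chi ->
  (exists u v, H u v) ->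
  (exists chi' : 'I_n -> nat, pce_solution H k V0 chi chi') ->
  exists C : job n -> nat, feasible H k V0 chi C /\ cmax_le k V0 chi C k.
Proof.
move=> [_ [_ [chi_range _]]] [u [v uv]] [chi' [chi'_range [chi'_proper chi'_ext]]].
have k_ge2 : 2 <= k := colors_ge2_of_edge chi'_range chi'_proper uv.
exists (fun x => start k chi chi' x + ptime k chi x); split.
- apply: feasible_of_start => x y.
  exact: start_conflict_disjoint chi_range chi'_range chi'_proper chi'_ext k_ge2 x y.
- by move=> x; apply: start_ptime_le.
Qed.
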